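(* Let $M\in\mathbb Z_{\geq0}$ and $v_0,\dots,v_M\in\mathcal V$ with $v_0<v_1<\dots<v_M$ and $v_{i+1}\in\pi(\Psi(v_i))$ for all $i\in\{0,\dots,M-1\}$. Then $M\leq (n+1)\frac{v_M+\mu_\kappa}{\tau}+h(v_M)$.
   Context: Let $\mathbf K$ be a field and $\ell\geq 2$ an integer. Let $L=a_n\phi_\ell^n+\dots+a_0$ with $n\geq1$, $a_i\in\mathbf K[z]$, $a_0a_n\neq0$, where $\phi_\ell(f)(z)=f(z^\ell)$ acting on Hahn series with coefficients in $\mathbf K$ and value group $\mathbb Q$. Let $\mathcal P(L)=\{(\ell^i,j): 0\le i\le n,\ j\in\operatorname{supp} a_i\}$. The Newton polygon of $L$ is the convex hull of $\{(\ell^i,j): 0\le i\le n,\ j\geq\operatorname{val} a_i\}\subset\mathbb R^2$; its non-vertical edges have slopes $\mu_1<\dots<\mu_\kappa$, $\mathcal S(L)=\{\mu_1,\dots,\mu_\kappa\}$. Let $d\geq1$ be a common multiple of the denominators of the $\mu_k$; $\mathbb Z_{d,\ell}=\bigcup_{i\geq0}\frac{1}{d\ell^i}\mathbb Z$, and $h(v)=\min\{i\geq0: v\in\frac1{d\ell^i}\mathbb Z\}$ for $v\in\mathbb Z_{d,\ell}$. Define $\Psi(v)=\{v\ell^i+j:(\ell^i,j)\in\mathcal P(L)\}$, $\pi(q)=\max\{(q-j)/\ell^i:(\ell^i,j)\in\mathcal P(L)\}$. Let $\mathcal V_0=-\mathcal S(L)$, $\mathcal V_{i+1}=\bigcup_{v\in\mathcal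 V_i}\pi(\Psi(v))$, $\mathcal V=\bigcup_{i\ge0}\mathcal V_i$ (a well-ordered subset of $\mathbb Z_{d,\ell}$). For $v\in\mathbb Q$ let $\epsilon(v)=\min\{w\in\mathcal V: w>v\}-v\in\mathbb Q_{>0}\cup\{+\infty\}$ ($+\infty$ if this set is empty), and $\tau=\min\{\epsilon(-\mu_1),\dots,\epsilon(-\mu_\kappa),(d\ell^n)^{-1}\}\in\mathbb Q_{>0}$. *)

From HB Require Import structures.
From mathcomp Require Import all_boot all_order all_algebra.
Set Implicit Arguments. Unset Strict Implicit. Unset Printing Implicit Defensive.
Import Order.TTheory GRing.Theory Num.Theory.
Local Open Scope ring_scope.

(* The operator L = a_n phi^n + ... + a_0 is represented by ell, n and the
   coefficient polynomials a 0, ..., a n (values a i for i > n are ignored). *)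
Section Defs.
Variables (K : fieldType) (ell n : nat) (a : nat -> {poly K}).

Definition valp (p : {poly K}) : nat := find (fun c => c != 0) (polyseq p).

(* the points (ell^i, j) of P(L), encoded by the pairs (i, j) *)
Definition ptsP : seq (nat * nat) :=
  [seq (i, j) | i <- iota 0 n.+1,
                j <- [seq j <- iota 0 (size (a i)) | (a i)`_j != 0]].

(* mu is the slope of a non-vertical edge of the Newton polygon:
   the supporting line of slope mu of the Newton polygon (i.e. the minimum of
   y - mu x over the polygon) touches it at two points with distinct abscissae *)
Definition isSlope (mu : rat) : Prop :=
  exists i1 i2 : nat, [/\ i1 != i2, (i1 <= n)%N, (i2 <= n)%N, a i1 != 0 & a i2 != 0] /\
    (forall i, (i <= n)%N -> a i != 0 ->
      ((valp (a i1))%:R - mu * (ell ^ i1)%:R <= (valp (a i))%:R - mu * (ell ^ i)%:R)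
      /\ ((valp (a i2))%:R - mu * (ell ^ i2)%:R <= (valp (a i))%:R - mu * (ell ^ i)%:R)).

Definition inPsi (v q : rat) : Prop :=
  exists i j : nat, [/\ (i <= n)%N, (a i)`_j != 0 & q = v * (ell ^ i)%:R + j%:R].

Definition piL (q : rat) : rat :=
  let p0 := head (0%N, 0%N) ptsP in
  \big[Num.max/((q - p0.2%:R) / (ell ^ p0.1)%:R)]_(p <- ptsP)
     ((q - p.2%:R) / (ell ^ p.1)%:R).

Fixpoint inVk (k : nat) : rat -> Prop :=
  match k with
  | 0 => fun w => isSlope (- w)
  | k'.+1 => fun w => exists v, inVk k' v /\ exists q, inPsi v q /\ w = piL q
  end.

Definition inV (w : rat) : Prop := exists k, inVk k w.

(* tau = min{eps(-mu_1), ..., eps(-mu_kappa), 1/(d ell^n)}, i.e. the minimum of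
   1/(d ell^n) together with all w + mu for mu in S(L), w in V, w > -mu *)
Definition is_tau (d : nat) (tau : rat) : Prop :=
  [/\ tau = 1 / (d * ell ^ n)%:R
      \/ (exists mu w, [/\ isSlope mu, inV w, - mu < w & tau = w + mu]),
      tau <= 1 / (d * ell ^ n)%:R &
      forall mu w, isSlope mu -> inV w -> - mu < w -> tau <= w + mu].

End Defs.

(* h(v) = min { i >= 0 : v \in (1/(d ell^i)) Z }; the search is bounded by
   denq v, which suffices for every v in Z_{d,ell} *)
Definition hfun (d ell : nat) (v : rat) : nat :=
  find (fun i => denq (v * (d * ell ^ i)%:R) == 1) (iota 0 `|denq v|%N.+1).

From HB Require Import structures.
From mathcomp Require Import all_boot all_order all_algebra.
From mathcomp Require Import zify ring lra.
Set Implicit Arguments. Unset Strict Implicit. Unset Printing Implicit Defensive.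
Import Order.TTheory GRing.Theory Num.Theory.
Local Open Scope ring_scope.

(* The potential Phi(v) = (n+1)(v + mu_kappa)/tau + h(v) is nonnegative on V
   and increases by at least 1 at each step v -> v' = pi(q), q = v l^i0 + j0.
   Let p be the largest index with q = v' l^p + val(a_p); comparing the two
   expressions of q gives h(v) <= h(v') - p + i0, so h drops by at most n, and
   it suffices to show that h(v) < h(v') or v' - v >= tau:
   - i0 < p: h grows unless v, v' both lie in (1/(d l^n))Z, where gaps are
     at least 1/(d l^n) >= tau;
   - i0 = p: (v' - v) l^p is a positive integer;
   - i0 > p: the Newton polygon has an edge of slope mu > -v' leaving p, so
     tau <= v' + mu, and if v > -mu also tau <= v + mu; then l^i0 >= 2 l^p
     gives v' + mu >= 2 (v + mu). *)

Lemma dvdn_mul_expn_self D d l g : (0 < D)%N -> (0 < d)%N -> (0 < l)%N ->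
  (D %| d * l ^ g)%N -> (D %| d * l ^ D)%N.
Proof.
move=> D0 d0 l0 Dg; apply/dvdn_partP => // p; rewrite mem_primes => /and3P[p_pr _ _].
have dlX k : (0 < d * l ^ k)%N by rewrite muln_gt0 d0 expn_gt0 l0.
have lX k : (0 < l ^ k)%N by rewrite expn_gt0 l0.
rewrite p_part pfactor_dvdn // lognM // lognX.
have := dvdn_leq_log p (dlX g) Dg; rewrite lognM // lognX.
have [-> | lp _] := posnP (logn p l); first by rewrite !muln0.
by rewrite (leq_trans (ltnW (ltn_logl p D0))) // (leq_trans _ (leq_addl _ _)) ?leq_pmulr.
Qed.

Lemma int_mul_natE (x : rat) (N : nat) :
  (x * N%:R \is a Num.int) = (denq x %| N%:Z)%Z.
Proof.
apply/idP/idP => [/intrP[m Hm] | /dvdnP[c /= ->]].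
  have E : (m * denq x = numq x * N%:Z)%R.
    by apply: (@intr_inj rat); rewrite !rmorphM /= -Hm numqE pmulrn mulrAC.
  have E2 : (`|m| * `|denq x| = `|numq x| * N)%N.
    by rewrite -[in RHS](absz_nat N) -!abszM E.
  rewrite -topredE /= /dvdz /= -(@Gauss_dvdr _ `|numq x|); last by rewrite coprime_sym coprime_num_den.
  by rewrite -E2 dvdn_mull.
have -> : ((c * `|denq x|)%:R : rat) = c%:R * (denq x)%:~R.
  by rewrite natrM -[`|denq x|%:R]/((`|denq x|%:Z)%:~R) absz_denq.
by rewrite mulrCA -numqE rpredM ?intr_int ?natr_int.
Qed.

Lemma inv_le_of_int_mul (x : rat) (N : nat) : 0 < x -> (0 < N)%N ->
  x * N%:R \is a Num.int -> N%:R^-1 <= x.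
Proof.
move=> x0 N0 xN; rewrite -[N%:R^-1]mul1r ler_pdivrMr ?ltr0n //.
have := norm_intr_ge1 xN; rewrite gtr0_norm ?mulr_gt0 ?ltr0n //.
by apply; rewrite gt_eqF // mulr_gt0 ?ltr0n.
Qed.

Section Height.
Variables d ell : nat.

Definition dl_int (g : nat) (x : rat) := x * (d * ell ^ g)%:R \is a Num.int.

Lemma dl_int_mono g m x : (g <= m)%N -> dl_int g x -> dl_int m x.
Proof.
rewrite /dl_int => gm xZ.
by rewrite -(subnKC gm) expnD mulnA natrM mulrA rpredM ?natr_int.
Qed.

Lemma hfun_le g x : dl_int g x -> (hfun d ell x <= g)%N.
Proof.
move=> xZ; rewrite /hfun; case: (ltnP g `|denq x|.+1) => g_lt.
  rewrite leqNgt; apply/negP => /(before_find 0%N).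
  by rewrite nth_iota // add0n -Qint_def [_ \is a _]xZ.
apply: leq_trans g_lt.
by rewrite -[X in (_ <= X)%N](size_iota 0) find_size.
Qed.

Hypotheses (d0 : (0 < d)%N) (ell0 : (0 < ell)%N).

Lemma dl_int_hfun g x : dl_int g x -> dl_int (hfun d ell x) x.
Proof.
rewrite {1}/dl_int int_mul_natE => xZ.
have den0 : (0 < `|denq x|)%N by rewrite absz_gt0 denq_neq0.
have has_h : has (dl_int ^~ x) (iota 0 `|denq x|.+1).
  apply/hasP; exists `|denq x|%N; first by rewrite mem_iota add0n ltnS leqnn.
  by rewrite /dl_int int_mul_natE; apply: dvdn_mul_expn_self xZ.
have := nth_find 0%N has_h; rewrite nth_iota; first exact.
by rewrite -[X in (_ < X)%N](size_iota 0) -has_find.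
Qed.

Lemma dl_intE g m x : dl_int g x -> dl_int m x = (hfun d ell x <= m)%N.
Proof.
move=> xZ; apply/idP/idP; first exact: hfun_le.
by move=> hm; apply: dl_int_mono hm (dl_int_hfun xZ).
Qed.

Lemma dl_int_transfer v v' i i' (j j' : nat) g :
  v * (ell ^ i)%:R + j%:R = v' * (ell ^ i')%:R + j'%:R ->
  dl_int (g + i') v' -> dl_int (g + i) v.
Proof.
rewrite /dl_int !expnD !mulnA !(natrM _ (_ * _)) => E v'Z.
have -> : v * ((d * ell ^ g)%:R * (ell ^ i)%:R) =
    v' * ((d * ell ^ g)%:R * (ell ^ i')%:R) + (j'%:R - j%:R) * (d * ell ^ g)%:R.
  rewrite mulrCA (_ : v * _ = v' * (ell ^ i')%:R + j'%:R - j%:R); last by rewrite -E addrK.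
  ring.
by rewrite rpredD // rpredM ?rpredB ?natr_int.
Qed.

Lemma hfun_transfer v v' i i' (j j' : nat) g :
  v * (ell ^ i)%:R + j%:R = v' * (ell ^ i')%:R + j'%:R -> dl_int g v' ->
  (hfun d ell v <= (hfun d ell v' - i') + i)%N.
Proof.
move=> E v'Z; apply: hfun_le; apply: dl_int_transfer E _.
by rewrite (dl_intE _ v'Z); lia.
Qed.

End Height.

Lemma valp_le (K : fieldType) (p : {poly K}) j : p`_j != 0 -> (valp p <= j)%N.
Proof. by move=> pj; rewrite leqNgt; apply: contra pj => /(before_find 0)/negbFE. Qed.

Lemma coef_valp (K : fieldType) (p : {poly K}) : p != 0 -> p`_(valp p) != 0.
Proof.
move=> p0; apply: (@nth_find _ 0 (fun c => c != 0)); apply/hasP.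
by exists (lead_coef p); rewrite ?lead_coef_eq0 // lead_coefE mem_nth // prednK ?size_poly_gt0.
Qed.

Section NewtonPolygon.
Variables (K : fieldType) (ell n : nat) (a : nat -> {poly K}).

Local Notation L i := ((ell ^ i)%:R : rat).
Local Notation val i := ((valp (a i))%:R : rat).

Lemma mem_ptsP i j : ((i, j) \in ptsP n a) = (i <= n)%N && ((a i)`_j != 0).
Proof.
apply/allpairsPdep/andP => [[i' [j' [+ + [-> ->]]]] | [i_n aij]].
  by rewrite mem_iota ltnS mem_filter => ? /andP[].
exists i, j; split=> //; first by rewrite mem_iota ltnS.
rewrite mem_filter aij mem_iota /= ltnNge; apply: contra aij.
by move=> /(nth_default 0) ->.
Qed.

Hypotheses (ell0 : (0 < ell)%N) (a0 : a 0%N != 0).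

Lemma L_gt0 i : 0 < L i.
Proof. by rewrite ltr0n expn_gt0 ell0. Qed.

Lemma piL_ub q i j : (i <= n)%N -> (a i)`_j != 0 -> q <= piL ell n a q * L i + j%:R.
Proof.
move=> i_n aij; rewrite -lerBlDr -ler_pdivrMr ?L_gt0 //.
by apply: (le_bigmax_seq _ (i, j)); rewrite ?mem_ptsP ?i_n.
Qed.

Lemma piL_attained q : exists i, [/\ (i <= n)%N, a i != 0 & q = piL ell n a q * L i + val i].
Proof.
have [[i j] /[!mem_ptsP] /andP[i_n aij] E] :
    exists2 p, p \in ptsP n a & piL ell n a q = (q - p.2%:R) / L p.1.
  rewrite /piL /= big_seq.
  apply: (big_ind (fun b => exists2 p, p \in ptsP n a & b = (q - p.2%:R) / L p.1))
    => [|x y [p p_in ->] [p' p'_in ->] | p p_in].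
  - exists (head (0%N, 0%N) (ptsP n a)) => //.
    have : (0%N, valp (a 0%N)) \in ptsP n a by rewrite mem_ptsP coef_valp.
    by case: (ptsP n a) => [|x s] //= _; rewrite mem_head.
  - by rewrite maxEle; case: ifP => _; [exists p' | exists p].
  - by exists p.
have ai0 : a i != 0 by apply: contraNneq aij => ->; rewrite coef0.
have q_eq : q = piL ell n a q * L i + j%:R by rewrite E divfK ?subrK ?gt_eqF ?L_gt0.
exists i; split=> //; apply: le_anti; rewrite piL_ub ?coef_valp //=.
by rewrite [X in _ <= X]q_eq lerD2l ler_nat valp_le.
Qed.

Lemma piL_rightmost q (w := piL ell n a q) : exists p, [/\ (p <= n)%N, a p != 0,
  q = w * L p + val p & forall i, (p < i <= n)%N -> a i != 0 -> q < w * L i + val i].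
Proof.
pose P i := [&& (i <= n)%N, a i != 0 & q == w * L i + val i].
have exP : exists i, P i.
  by have [i [i_n ai E]] := piL_attained q; exists i; rewrite /P i_n ai -E eqxx.
have ubP i : P i -> (i <= n)%N by case/andP.
case: (ex_maxnP exP ubP) => p /and3P[p_n ap /eqP Ep] p_max.
exists p; split=> // i /andP[pi i_n] ai.
rewrite lt_neqAle piL_ub ?coef_valp // andbT; apply/eqP => E.
by have := p_max i; rewrite /P i_n ai -E eqxx leqNgt pi => /(_ isT).
Qed.

Lemma piL_ge v q : inPsi ell n a v q -> v <= piL ell n a q.
Proof.
move=> [i [j [i_n aij ->]]].
by have := piL_ub (v * L i + j%:R) i_n aij; rewrite lerD2r ler_pM2r ?L_gt0.
Qed.

Lemma isSlope_right_of_min w p i0 : (1 < ell)%N -> (p <= n)%N -> a p != 0 ->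
  (forall i, (i <= n)%N -> a i != 0 -> w * L p + val p <= w * L i + val i) ->
  (forall i, (p < i <= n)%N -> a i != 0 -> w * L p + val p < w * L i + val i) ->
  (p < i0 <= n)%N -> a i0 != 0 ->
  exists mu, [/\ isSlope ell n a mu, - mu < w & val p - mu * L p <= val i0 - mu * L i0].
Proof.
move=> ell1 p_n ap p_min p_rmin /andP[p_i0 i0_n] ai0.
have L_lt i k : (i < k)%N -> L i < L k by move=> ik; rewrite ltr_nat ltn_exp2l.
pose c i := (val i - val p) / (L i - L p).
pose P (i : 'I_n.+1) := (p < i)%N && (a i != 0).
have P_i0 : P (Ordinal (i0_n : (i0 < n.+1)%N)) by rewrite /P p_i0 ai0.
case: (arg_minP (fun i : 'I_n.+1 => c i) P_i0) => -[i2 /= i2_n] /andP[/= p_i2 ai2] i2_min.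
have pi2n : (p < i2 <= n)%N by rewrite p_i2.
have dL_gt0 i : (p < i)%N -> 0 < L i - L p by move=> pi; rewrite subr_gt0 L_lt.
set mu := c i2.
have right_ge i : (p < i <= n)%N -> a i != 0 -> val p - mu * L p <= val i - mu * L i.
  move=> /andP[pi i_n] ai.
  have : mu <= c i by apply: (i2_min (Ordinal (i_n : (i < n.+1)%N))); rewrite /P pi ai.
  by rewrite /c ler_pdivlMr ?dL_gt0 // mulrBr; lra.
have edge : val i2 - mu * L i2 = val p - mu * L p.
  by rewrite /mu /c; field; rewrite gt_eqF ?dL_gt0.
have mu_lt : - mu < w.
  have := p_rmin i2 pi2n ai2.
  by move=> h; rewrite -(ltr_pM2r (dL_gt0 _ p_i2)) !mulrBr !mulNr; lra.
have line_ge i : (i <= n)%N -> a i != 0 -> val p - mu * L p <= val i - mu * L i.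
  move=> i_n ai; case: (ltnP p i) => [pi | ip]; first by apply: right_ge ai; rewrite pi.
  have dL_ge0 : 0 <= L p - L i by rewrite subr_ge0 ler_nat (leq_pexp2l (ltnW ell1) ip).
  have wmu_ge0 : 0 <= w + mu by lra.
  have := mulr_ge0 wmu_ge0 dL_ge0; have := p_min i i_n ai.
  rewrite !mulrBr !mulrDl; lra.
exists mu; split; [|by []|exact: line_ge].
exists p, i2; split; first by rewrite neq_ltn p_i2.
by move=> i i_n ai; rewrite edge; split; apply: line_ge.
Qed.

Lemma inV_ge muK : (forall mu, isSlope ell n a mu -> mu <= muK) ->
  forall w, inV ell n a w -> - muK <= w.
Proof.
move=> muK_max w [k]; elim: k w => [|k IH] w /=; first by move=> /muK_max; rewrite lerNl.
by move=> [v [Vv [q [vq ->]]]]; apply: le_trans (IH v Vv) (piL_ge vq).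
Qed.

Lemma inV_dl_int d : (forall mu, isSlope ell n a mu -> (denq mu %| d%:Z)%Z) ->
  forall w, inV ell n a w -> exists g, dl_int d ell g w.
Proof.
move=> den_d w [k]; elim: k w => [|k IH] w /=.
  by move=> /den_d; rewrite denqN => wd; exists 0%N; rewrite /dl_int muln1 int_mul_natE.
move=> [v [Vv [q [[i [j [_ _ Eq]]] ->]]]].
have [g vZ] := IH v Vv; have [i' [_ _ Eq']] := piL_attained q.
have E : piL ell n a q * L i' + val i' = v * L i + j%:R by rewrite -Eq' -Eq.
by exists (g + i')%N; apply: dl_int_transfer E (dl_int_mono (leq_addr i g) vZ).
Qed.

End NewtonPolygon.

Section Steps.
Variables (K : fieldType) (ell n : nat) (a : nat -> {poly K}) (d : nat) (tau : rat).
Hypotheses (ell1 : (1 < ell)%N) (d0 : (0 < d)%N) (a0 : a 0%N != 0).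
Hypothesis den_d : forall mu, isSlope ell n a mu -> (denq mu %| d%:Z)%Z.
Hypothesis tau_spec : is_tau ell n a d tau.

Local Notation L i := ((ell ^ i)%:R : rat).
Local Notation val i := ((valp (a i))%:R : rat).
Local Notation H x := (hfun d ell x).
Local Notation inV := (inV ell n a).

Let ell0 : (0 < ell)%N := ltnW ell1.

Lemma tau_gt0 : 0 < tau.
Proof.
have [[-> | [mu [w [_ _ mu_w ->]]]] _ _] := tau_spec; last lra.
by rewrite mul1r invr_gt0 ltr0n muln_gt0 d0 expn_gt0 ell0.
Qed.

Lemma tau_le_of_int_mul x N : 0 < x -> (0 < N)%N -> (N <= d * ell ^ n)%N ->
  x * N%:R \is a Num.int -> tau <= x.
Proof.
move=> x0 N0 N_le xN; have [_ tau_le _] := tau_spec.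
apply: le_trans tau_le (le_trans _ (inv_le_of_int_mul x0 N0 xN)).
by rewrite mul1r lef_pV2 ?ler_nat // posrE ltr0n // (leq_trans N0).
Qed.

Lemma gap_same_column v v' i (j j' : nat) : v < v' -> (i <= n)%N ->
  v * L i + j%:R = v' * L i + j'%:R -> tau <= v' - v.
Proof.
move=> vv' i_n E; apply: (@tau_le_of_int_mul _ (ell ^ i)); rewrite ?subr_gt0 ?expn_gt0 ?ell0 //.
  by rewrite (leq_trans (leq_pexp2l ell0 i_n)) ?leq_pmull.
have -> : (v' - v) * L i = j%:R - j'%:R by rewrite mulrBl; lra.
by rewrite rpredB ?natr_int.
Qed.

Lemma gap_or_height_left v v' i0 p (j0 j' : nat) : inV v -> inV v' -> v < v' ->
  (i0 < p <= n)%N -> v * L i0 + j0%:R = v' * L p + j'%:R ->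
  tau <= v' - v \/ (H v < H v')%N.
Proof.
move=> Vv Vv' vv' /andP[i0p p_n] E.
have [g vZ] := inV_dl_int ell0 a0 den_d Vv; have [g' v'Z] := inV_dl_int ell0 a0 den_d Vv'.
have := hfun_transfer d0 ell0 E v'Z.
case: (leqP (H v') n) => [hv'_n | ]; last by right; lia.
case: (leqP (H v) n) => [hv_n _ | ]; last by lia.
left; apply: (@tau_le_of_int_mul _ (d * ell ^ n)); rewrite ?subr_gt0 ?muln_gt0 ?d0 ?expn_gt0 ?ell0 //.
by rewrite mulrBl rpredB // -/(dl_int d ell n _) (dl_intE d0 ell0 _ vZ, dl_intE d0 ell0 _ v'Z).
Qed.

Lemma gap_right v v' p i0 (j0 : nat) : inV v -> inV v' -> (p <= n)%N -> a p != 0 ->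
  (forall i, (i <= n)%N -> a i != 0 -> v' * L p + val p <= v' * L i + val i) ->
  (forall i, (p < i <= n)%N -> a i != 0 -> v' * L p + val p < v' * L i + val i) ->
  (p < i0 <= n)%N -> (a i0)`_j0 != 0 -> v * L i0 + j0%:R = v' * L p + val p ->
  tau <= v' - v.
Proof.
move=> Vv Vv' p_n ap p_min p_rmin pi0n ai0j0 E; have /andP[p_i0 _] := pi0n.
have ai0 : a i0 != 0 by apply: contraNneq ai0j0 => ->; rewrite coef0.
have [mu [slope mu_v' line]] :=
  isSlope_right_of_min ell1 p_n ap p_min p_rmin pi0n ai0.
have [_ _ tau_le] := tau_spec.
have := tau_le mu v' slope Vv' mu_v'.
have [v_le | mu_v] := leP v (- mu); first lra.
have := tau_le mu v slope Vv mu_v.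
suff : v + mu <= v' - v by lra.
have val_le : val i0 <= j0%:R by rewrite ler_nat valp_le.
have L_le : L p + L p <= L i0.
  rewrite -natrD addnn -mul2n ler_nat (leq_trans _ (leq_pexp2l ell0 p_i0)) //.
  by rewrite expnS leq_mul2r ell1 orbT.
have vmu_ge0 : 0 <= v + mu by lra.
have := ler_wpM2l vmu_ge0 L_le.
by move=> h; rewrite -(ler_pM2r (L_gt0 ell0 p)) !(mulrDl, mulrBl); lra.
Qed.

Lemma gap_or_height v v' q : inV v -> inV v' -> v < v' ->
  inPsi ell n a v q -> v' = piL ell n a q -> tau <= v' - v \/ (H v < H v')%N.
Proof.
move=> Vv Vv' vv' [i0 [j0 [i0_n ai0j0 Eq]]] Ev'.
have [p [p_n ap Ep p_rmin]] := piL_rightmost n ell0 a0 q; rewrite -Ev' in Ep p_rmin.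
have E : v * L i0 + j0%:R = v' * L p + val p by rewrite -Eq.
case: (ltngtP i0 p) => [i0_p | p_i0 | i0p].
- by apply: gap_or_height_left Vv Vv' vv' _ E; rewrite i0_p.
- left; apply: gap_right Vv Vv' p_n ap _ _ _ ai0j0 E; rewrite ?p_i0 // -Ep.
  + by move=> i i_n ai; have := piL_ub ell0 q i_n (coef_valp ai); rewrite -Ev'.
  + by move=> i; apply: p_rmin.
- by left; rewrite -i0p in E; apply: gap_same_column vv' i0_n E.
Qed.

Lemma hfun_drop v v' q : inV v' -> inPsi ell n a v q -> v' = piL ell n a q ->
  (H v <= H v' + n)%N.
Proof.
move=> Vv' [i [j [i_n _ Eq]]] Ev'.
have [g v'Z] := inV_dl_int ell0 a0 den_d Vv'.
have [i' [_ _ Eq']] := piL_attained n ell0 a0 q; rewrite -Ev' in Eq'.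
have E : v * L i + j%:R = v' * L i' + val i' by rewrite -Eq.
by have := hfun_transfer d0 ell0 E v'Z; lia.
Qed.

Lemma potential_step c v v' q : inV v -> inV v' -> v < v' ->
  inPsi ell n a v q -> v' = piL ell n a q ->
  (n.+1)%:R * (v + c) / tau + (H v)%:R + 1 <= (n.+1)%:R * (v' + c) / tau + (H v')%:R.
Proof.
move=> Vv Vv' vv' vq Ev'.
have tau0 := tau_gt0.
have -> : (n.+1)%:R * (v' + c) / tau = (n.+1)%:R * (v + c) / tau + (n.+1)%:R * (v' - v) / tau.
  by field; rewrite gt_eqF.
have drop : ((H v)%:R : rat) <= (H v')%:R + n%:R by rewrite -natrD ler_nat (hfun_drop Vv' vq).
have [gap | height] := gap_or_height Vv Vv' vv' vq Ev'.
- have : (n.+1)%:R <= (n.+1)%:R * (v' - v) / tau :> rat.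
    by rewrite ler_pdivlMr // ler_pM2l ?ltr0n.
  rewrite -natr1; lra.
- have : ((H v)%:R : rat) + 1 <= (H v')%:R by rewrite natr1 ler_nat.
  have : 0 <= (n.+1)%:R * (v' - v) / tau :> rat.
    by rewrite divr_ge0 ?mulr_ge0 ?ltW ?subr_gt0.
  lra.
Qed.

End Steps.

Unset Implicit Arguments.
Theorem mainTheorem10 (K : fieldType) (ell n : nat) (a : nat -> {poly K})
  (d : nat) (muK tau : rat) (M : nat) (v : nat -> rat) :
  (2 <= ell)%N -> (1 <= n)%N -> a 0%N != 0 -> a n != 0 ->
  (1 <= d)%N -> (forall mu, isSlope ell n a mu -> (denq mu %| d%:Z)%Z) ->
  isSlope ell n a muK -> (forall mu, isSlope ell n a mu -> mu <= muK) ->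
  is_tau ell n a d tau ->
  (forall i, (i <= M)%N -> inV ell n a (v i)) ->
  (forall i, (i < M)%N -> v i < v i.+1) ->
  (forall i, (i < M)%N -> exists q, inPsi ell n a (v i) q /\ v i.+1 = piL ell n a q) ->
  (M%:R : rat) <= (n.+1)%:R * (v M + muK) / tau + (hfun d ell (v M))%:R.
Proof.
move=> ell1 _ a0 _ d0 den_d _ muK_max tau_spec Vv v_lt v_step.
suff : forall k, (k <= M)%N ->
    (k%:R : rat) <= (n.+1)%:R * (v k + muK) / tau + (hfun d ell (v k))%:R by apply.
elim=> [_ | k IH kM].
  have v0_ge : 0 <= v 0%N + muK by have := inV_ge (ltnW ell1) muK_max (Vv 0%N isT); lra.
  have tau0 := tau_gt0 ell1 d0 tau_spec.
  by apply: addr_ge0; rewrite // divr_ge0 ?mulr_ge0 // ltW.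
have [q [vq v_next]] := v_step k kM.
have := potential_step ell1 d0 a0 den_d tau_spec muK
  (Vv k (ltnW kM)) (Vv k.+1 kM) (v_lt k kM) vq v_next.
by apply: le_trans; rewrite -natr1 lerD2r IH // ltnW.
Qed.
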